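(* Let $\mathcal{X},\mathcal{Y},\mathcal{Z}$ be sets, $\mathcal{G}=\{g_1,\dots,g_K\}$ a finite set of maps $\mathcal{X}\to\mathcal{Z}$, and $\mathcal{H}$ a set of maps $\mathcal{Z}\to\mathbb{R}$. Fix arbitrary datasets $\mathcal{S}_t=((x_{t,1},y_{t,1}),\dots,(x_{t,m},y_{t,m}))$, $t=1,\dots,T$, all of size $m$. Assume that for every $t$ and every $g\in\mathcal{G}$, $\hat L_t(g)\in[0,C]$ and $\mathcal{R}_t(g)\le\beta(g,m)$. Run EWA-LL with $\pi_1$ uniform on $\mathcal{G}$ and $\eta=\frac{2}{C}\sqrt{\frac{2\log K}{T}}$. Then $$\frac{1}{T}\sum_{t=1}^T\mathbb{E}_{\hat g_t\sim\pi_t}\Big[\frac{1}{m}\sum_{i=1}^m\hat\ell_{t,i}\Big]\le\min_{1\le k\le K}\Bigg\{\frac{1}{T}\sum_{t=1}^T\inf_{h_t\in\mathcal{H}}\frac{1}{m}\sum_{i=1}^m\ell\big(h_t\circ g_k(x_{t,i}),y_{t,i}\big)+\beta(g_k,m)\Bigg\}+C\sqrt{\frac{\log K}{2T}}.$$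
   Context: Within-task algorithm: for each task $t$ and each $g\in\mathcal{G}$, an online algorithm processes $\mathcal{S}_t$ sequentially, producing at step $i$ a prediction $\hat y^g_{t,i}$ depending only on $g$, $x_{t,1},\dots,x_{t,i}$, $y_{t,1},\dots,y_{t,i-1}$. Let $\hat L_t(g)=\frac{1}{m}\sum_{i=1}^m\ell(\hat y^g_{t,i},y_{t,i})$ and $\mathcal{R}_t(g)=\hat L_t(g)-\inf_{h\in\mathcal{H}}\frac1m\sum_{i=1}^m\ell(h\circ g(x_{t,i}),y_{t,i})$. EWA-LL: given a prior $\pi_1$ on $\mathcal{G}$ and $\eta>0$, for $t=1,\dots,T$: draw $\hat g_t\sim\pi_t$; run the within-task algorithm on $\mathcal{S}_t$ with $\hat g_t$, incurring losses $\hat\ell_{t,i}=\ell(\hat y^{\hat g_t}_{t,i},y_{t,i})$; update $\pi_{t+1}(g_k)=\exp(-\eta\hat L_t(g_k))\pi_t(g_k)/\sum_{j=1}^K\exp(-\eta\hat L_t(g_j))\pi_t(g_j)$. $\mathbb{E}_{\hat g_t\sim\pi_t}$ is over the random draw of $\hat g_t$. *)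

From mathcomp Require Import all_boot all_order all_algebra.
From mathcomp Require Import all_classical all_reals all_analysis.
Set Implicit Arguments. Unset Strict Implicit. Unset Printing Implicit Defensive.
Import Order.TTheory GRing.Theory Num.Theory.
Local Open Scope classical_set_scope.
Local Open Scope ring_scope.

(* Tasks are indexed t = 0, ..., T-1 and examples i = 0, ..., m-1;
   x t i, y t i is the i-th example (x_{t,i+1}, y_{t,i+1}) of dataset S_{t+1}.
   The within-task online algorithm [alg] receives the representation g,
   the past examples of the current task and the current input, and outputs
   a real prediction: hence yhat^g_{t,i} depends only on g, x_{t,1..i},
   y_{t,1..i-1}. *)

Definition within_pred {R : realType} {X Y Z : Type}
  (alg : (X -> Z) -> seq (X * Y) -> X -> R)
  (x : nat -> nat -> X) (y : nat -> nat -> Y) (g : X -> Z) (t i : nat) : R :=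
  alg g [seq (x t j, y t j) | j <- iota 0 i] (x t i).

Definition Lhat {R : realType} {X Y Z : Type}
  (alg : (X -> Z) -> seq (X * Y) -> X -> R) (loss : R -> Y -> R)
  (x : nat -> nat -> X) (y : nat -> nat -> Y) (m : nat) (g : X -> Z) (t : nat) : R :=
  m%:R^-1 * \sum_(i < m) loss (within_pred alg x y g t i) (y t i).

Definition best_loss {R : realType} {X Y Z : Type}
  (H : set (Z -> R)) (loss : R -> Y -> R)
  (x : nat -> nat -> X) (y : nat -> nat -> Y) (m : nat) (g : X -> Z) (t : nat)
  : \bar R :=
  ereal_inf [set (m%:R^-1 * \sum_(i < m) loss (h (g (x t i))) (y t i))%:E
            | h in H].

Definition within_regret {R : realType} {X Y Z : Type}
  (alg : (X -> Z) -> seq (X * Y) -> X -> R) (H : set (Z -> R))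
  (loss : R -> Y -> R) (x : nat -> nat -> X) (y : nat -> nat -> Y)
  (m : nat) (g : X -> Z) (t : nat) : \bar R :=
  ((Lhat alg loss x y m g t)%:E - best_loss H loss x y m g t)%E.

(* EWA-LL weights: ewa_pi L t = pi_{t+1}; pi_1 uniform on 'I_K,
   pi_{t+1}(k) = exp(-eta L_t(k)) pi_t(k) / sum_j exp(-eta L_t(j)) pi_t(j),
   where L t k = \hat L_t(g_k). *)
Fixpoint ewa_pi {R : realType} (K : nat) (eta : R) (L : nat -> 'I_K -> R)
  (t : nat) : 'I_K -> R :=
  match t with
  | 0 => fun _ => K%:R^-1
  | t'.+1 =>
      let p := ewa_pi eta L t' in
      fun k => expR (- eta * L t' k) * p k /
               \sum_(j < K) expR (- eta * L t' j) * p j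
  end.

(* E_{ghat_t ~ pi_t} [ (1/m) sum_i hat ell_{t,i} ]  (pi_t is deterministic) *)
Definition ewa_expected_loss {R : realType} {X Y Z : Type} (K : nat)
  (g : 'I_K -> X -> Z) (alg : (X -> Z) -> seq (X * Y) -> X -> R)
  (loss : R -> Y -> R) (x : nat -> nat -> X) (y : nat -> nat -> Y)
  (m : nat) (eta : R) (t : nat) : R :=
  let L := fun s k => Lhat alg loss x y m (g k) s in
  \sum_(k < K) ewa_pi eta L t k * L t k.

From mathcomp Require Import all_boot all_order all_algebra.
From mathcomp Require Import all_classical all_reals all_analysis.
From mathcomp Require Import ring lra zify.
Import Order.TTheory GRing.Theory Num.Theory.
Local Open Scope classical_set_scope.
Local Open Scope ring_scope.

(* With W_t = sum_j pi_t(j) exp (- eta L_t(j)) the weights unroll to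
   ln pi_{T+1}(k) = - ln K - eta sum_t L_t(k) - sum_t ln W_t, and Hoeffding's lemma
   bounds ln W_t by - eta E_{pi_t}[L_t] + eta^2 C^2 / 8.  As pi_{T+1}(k) <= 1, the
   expected cumulative loss exceeds that of expert k by at most
   ln K / eta + T eta C^2 / 8, which the chosen eta balances into T C sqrt (ln K / 2T).
   The within-task regret bound then gives L_t(k) <= inf_h ... + beta (g_k, m).
   Hoeffding's lemma is reduced to a two-point law, where
   s |-> ln (1 - q + q e^-s) + s q - s^2 / 8 vanishes to first order at 0 and is
   concave by AM-GM. *)

Section Hoeffding.
Variable R : realType.
Implicit Types q s : R.

Lemma le0_of_is_derive_le0 {f df : R -> R} :
  (forall s, is_derive s 1 f (df s)) -> (forall s, 0 < s -> df s <= 0) ->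
  f 0 = 0 -> forall s, 0 <= s -> f s <= 0.
Proof.
move=> f_df df_le0 f0 s s_ge0; rewrite -f0.
apply: (@ler0_derive1_nincry R f 0) => //.
- move=> x; rewrite in_itv /= andbT => x_gt0.
  by have f_x := f_df x; rewrite derive1E derive_val df_le0.
- by apply: derivable_within_continuous => x _; case: (f_df x).
Qed.

Definition bern_mgf q s := 1 - q + q * expR (- s).

Lemma bern_mgf_gt0 q s : 0 <= q <= 1 -> 0 < bern_mgf q s.
Proof.
move=> /andP[q_ge0 q_le1]; have := expR_gt0 (- s); rewrite /bern_mgf; nra.
Qed.

Lemma is_derive_bern_mgf q s :
  is_derive s 1 (bern_mgf q) (- (q * expR (- s))).
Proof.
have -> : bern_mgf q = cst (1 - q) + q *: (fun x => expR (- x)) by apply/funext.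
by apply: is_derive_eq; rewrite add0r mulrN1 scalerN.
Qed.

Definition hoeffding_gap q s := ln (bern_mgf q s) + s * q - s ^+ 2 / 8.

Definition hoeffding_gap' q s := q - q * expR (- s) / bern_mgf q s - s / 4.

Lemma is_derive_hoeffding_gap q s : 0 <= q <= 1 ->
  is_derive s 1 (hoeffding_gap q) (hoeffding_gap' q s).
Proof.
move=> q01; have u_gt0 := bern_mgf_gt0 q s q01.
have -> : hoeffding_gap q =
    (@ln R) \o bern_mgf q + (fun x => x * q) - (fun x => 8^-1 * x ^+ 2).
  by apply/funext => x; rewrite /hoeffding_gap !fctE /= [8^-1 * _]mulrC.
have ln_u := is_derive1_comp (is_derive1_ln u_gt0) (is_derive_bern_mgf q s).
apply: is_derive_eq.
by rewrite /hoeffding_gap' /GRing.scale /=; field; rewrite gt_eqF.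
Qed.

Lemma is_derive_hoeffding_gap' q s : 0 <= q <= 1 ->
  is_derive s 1 (hoeffding_gap' q)
    (q * (1 - q) * expR (- s) / bern_mgf q s ^+ 2 - 4^-1).
Proof.
move=> q01; have u_gt0 := bern_mgf_gt0 q s q01.
have -> : hoeffding_gap' q = cst q -
    (fun x => q * expR (- x)) * (fun x => (bern_mgf q x)^-1) - (fun x => 4^-1 * x).
  by apply/funext => x; rewrite /hoeffding_gap' !fctE [4^-1 * _]mulrC.
have inv_u := is_deriveV (lt0r_neq0 u_gt0) (is_derive_bern_mgf q s).
apply: is_derive_eq.
by rewrite /bern_mgf /GRing.scale /=; field; rewrite -/(bern_mgf q s) gt_eqF.
Qed.

Lemma hoeffding_gap'_le0 q s : 0 <= q <= 1 -> 0 <= s -> hoeffding_gap' q s <= 0.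
Proof.
move=> q01; apply: (le0_of_is_derive_le0 (fun x => is_derive_hoeffding_gap' q x q01)).
- move=> x _; have u_gt0 := bern_mgf_gt0 q x q01.
  rewrite subr_le0 ler_pdivrMr ?exprn_gt0 //.
  (* AM-GM: 4 a b <= (a + b)^2 with a = 1 - q and b = q e^{-x} *)
  have := sqr_ge0 (1 - q - q * expR (- x)); rewrite /bern_mgf; nra.
- by rewrite /hoeffding_gap' /bern_mgf oppr0 expR0 mulr1 subrK divr1; lra.
Qed.

Lemma hoeffding_gap_le0 q s : 0 <= q <= 1 -> 0 <= s -> hoeffding_gap q s <= 0.
Proof.
move=> q01; apply: (le0_of_is_derive_le0 (fun x => is_derive_hoeffding_gap q x q01)).
- by move=> x x_gt0; rewrite hoeffding_gap'_le0 // ltW.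
- by rewrite /hoeffding_gap /bern_mgf oppr0 expR0 mulr1 subrK ln1; lra.
Qed.

Lemma expR_chord (C lam x : R) : 0 < C -> 0 <= x <= C ->
  expR (- (lam * x)) <= x / C * expR (- (lam * C)) + (1 - x / C).
Proof.
move=> C_gt0 /andP[x_ge0 x_leC].
have xC_ge0 : 0 <= x / C by rewrite divr_ge0 // ltW.
have xC_le1 : x / C <= 1 by rewrite ler_pdivrMr // mul1r.
have := convex_expR (Itv01 xC_ge0 xC_le1) (- (lam * C)) 0.
rewrite !convRE /= expR0 mulr0 addr0 mulr1.
suff -> : x / C * - (lam * C) = - (lam * x) by [].
by field; rewrite gt_eqF.
Qed.

Lemma hoeffding_lemma (I : finType) (p L : I -> R) (C lam : R) :
  0 < C -> 0 <= lam -> (forall i, 0 <= p i) -> \sum_i p i = 1 ->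
  (forall i, 0 <= L i <= C) ->
  ln (\sum_i p i * expR (- (lam * L i))) <=
  - lam * (\sum_i p i * L i) + lam ^+ 2 * C ^+ 2 / 8.
Proof.
move=> C_gt0 lam_ge0 p_ge0 p_sum1 L_bnd.
set mu := \sum_i p i * L i.
have mu_ge0 : 0 <= mu.
  by apply: sumr_ge0 => i _; rewrite mulr_ge0 //; case/andP: (L_bnd i).
have mu_leC : mu <= C.
  rewrite -[C]mul1r -p_sum1 mulr_suml; apply: ler_sum => i _.
  by rewrite ler_wpM2l //; case/andP: (L_bnd i).
have q01 : 0 <= mu / C <= 1.
  by rewrite divr_ge0 ?ler_pdivrMr ?mul1r //= ltW.
(* By convexity of expR, the worst case is the two-point law on {0, C} with mean mu. *)
have mgf_le : \sum_i p i * expR (- (lam * L i)) <= bern_mgf (mu / C) (lam * C).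
  apply: (le_trans (y := \sum_i p i * (L i / C * expR (- (lam * C)) + (1 - L i / C)))).
    by apply: ler_sum => i _; rewrite ler_wpM2l // expR_chord.
  under eq_bigr => i _ do rewrite mulrDr mulrBr mulr1 !mulrA.
  rewrite big_split sumrB /= p_sum1 -!mulr_suml /bern_mgf /mu; lra.
have mgf_gt0 : 0 < \sum_i p i * expR (- (lam * L i)).
  apply: (lt_le_trans (expR_gt0 (- (lam * C)))).
  rewrite -[X in X <= _]mul1r -p_sum1 mulr_suml; apply: ler_sum => i _.
  rewrite ler_wpM2l // ler_expR lerN2 ler_wpM2l //.
  by case/andP: (L_bnd i).
apply: (le_trans (y := ln (bern_mgf (mu / C) (lam * C)))).
  by rewrite ler_ln // posrE bern_mgf_gt0.
have := hoeffding_gap_le0 (mu / C) (lam * C) q01 (mulr_ge0 lam_ge0 (ltW C_gt0)).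
rewrite /hoeffding_gap.
have -> : lam * C * (mu / C) = lam * mu by field; rewrite gt_eqF.
lra.
Qed.
End Hoeffding.

Lemma psumr_gt0 {R : numDomainType} {I : finType} (i0 : I) (F : I -> R) :
  (forall i, 0 < F i) -> 0 < \sum_i F i.
Proof.
move=> F_gt0; rewrite (bigD1 i0) //= ltr_pwDl //.
by apply: sumr_ge0 => i _; exact: ltW.
Qed.

Section EWA.
Variables (R : realType) (K : nat) (eta : R) (L : nat -> 'I_K -> R).
Hypothesis K_gt0 : (0 < K)%N.

Let i0 : 'I_K := Ordinal K_gt0.

Definition ewa_norm t := \sum_(j < K) expR (- eta * L t j) * ewa_pi eta L t j.

Lemma ewa_pi_gt0 t k : 0 < ewa_pi eta L t k.
Proof.
elim: t k => [|t IH] k /=; first by rewrite invr_gt0 ltr0n.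
rewrite divr_gt0 ?mulr_gt0 ?expR_gt0 //.
by apply: (psumr_gt0 i0) => j; rewrite mulr_gt0 ?expR_gt0.
Qed.

Lemma ewa_norm_gt0 t : 0 < ewa_norm t.
Proof. by apply: (psumr_gt0 i0) => j; rewrite mulr_gt0 ?expR_gt0 ?ewa_pi_gt0. Qed.

Lemma ewa_pi_sum1 t : \sum_k ewa_pi eta L t k = 1.
Proof.
case: t => [|t] /=.
  by rewrite sumr_const card_ord -[_ *+ _]mulr_natr mulVf // pnatr_eq0 -lt0n.
by rewrite -mulr_suml mulfV // (gt_eqF (ewa_norm_gt0 t)).
Qed.

Lemma ewa_pi_le1 t k : ewa_pi eta L t k <= 1.
Proof.
rewrite -(ewa_pi_sum1 t) (bigD1 k) //= lerDl.
by apply: sumr_ge0 => j _; exact/ltW/ewa_pi_gt0.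
Qed.

Lemma ln_ewa_pi n k : ln (ewa_pi eta L n k) =
  - ln K%:R - eta * \sum_(t < n) L t k - \sum_(t < n) ln (ewa_norm t).
Proof.
elim: n => [|n IH]; first by rewrite /= !big_ord0 lnV ?posrE ?ltr0n // mulr0 !subr0.
rewrite !big_ord_recr /= ln_div ?posrE ?mulr_gt0 ?expR_gt0 ?ewa_pi_gt0 ?ewa_norm_gt0 //.
by rewrite lnM ?posrE ?expR_gt0 ?ewa_pi_gt0 // expRK IH -/(ewa_norm n); ring.
Qed.

Lemma ewa_cumulative_loss_le (C : R) (T : nat) (k : 'I_K) : 0 < C -> 0 <= eta ->
  (forall t j, (t < T)%N -> 0 <= L t j <= C) ->
  eta * \sum_(t < T) \sum_j ewa_pi eta L t j * L t j <=
  ln K%:R + eta * \sum_(t < T) L t k + T%:R * (eta ^+ 2 * C ^+ 2 / 8).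
Proof.
move=> C_gt0 eta_ge0 L_bnd.
have := ln_le0 (ewa_pi_le1 T k); rewrite ln_ewa_pi => ln_pi_le0.
have ln_norm_le : \sum_(t < T) ln (ewa_norm t) <=
    \sum_(t < T) (- eta * (\sum_j ewa_pi eta L t j * L t j) + eta ^+ 2 * C ^+ 2 / 8).
  apply: ler_sum => t _.
  have := @hoeffding_lemma R _ _ _ _ _ C_gt0 eta_ge0 (fun j => ltW (ewa_pi_gt0 t j))
    (ewa_pi_sum1 t) (fun j => L_bnd t j (ltn_ord t)).
  congr (ln _ <= _); apply: eq_bigr => j _.
  by rewrite mulrC mulNr.
rewrite big_split /= -mulr_sumr sumr_const card_ord -mulr_natl in ln_norm_le.
lra.
Qed.

Lemma ewa_regret_le (C : R) (T : nat) (k : 'I_K) : 0 < C -> 0 < eta ->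
  (forall t j, (t < T)%N -> 0 <= L t j <= C) ->
  \sum_(t < T) \sum_j ewa_pi eta L t j * L t j <=
  \sum_(t < T) L t k + (ln K%:R / eta + T%:R * (eta * C ^+ 2 / 8)).
Proof.
move=> C_gt0 eta_gt0 L_bnd.
rewrite -(ler_pM2l eta_gt0).
rewrite (le_trans (ewa_cumulative_loss_le C T k C_gt0 (ltW eta_gt0) L_bnd)) //.
by rewrite le_eqVlt; apply/orP; left; apply/eqP; field; rewrite gt_eqF.
Qed.
End EWA.

Lemma tuned_rate_balance (R : rcfType) (a C T : R) : 0 < a -> 0 < C -> 0 < T ->
  a / (2 / C * Num.sqrt (2 * a / T)) + T * (2 / C * Num.sqrt (2 * a / T) * C ^+ 2 / 8)
  = T * (C * Num.sqrt (a / (2 * T))).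
Proof.
move=> a_gt0 C_gt0 T_gt0; set r := Num.sqrt (2 * a / T).
have r_gt0 : 0 < r by rewrite sqrtr_gt0 divr_gt0 // mulr_gt0.
have a_r : a = r ^+ 2 * T / 2.
  by rewrite sqr_sqrtr ?divr_ge0 ?mulr_ge0 ?ltW //; field; rewrite gt_eqF.
have -> : Num.sqrt (a / (2 * T)) = r / 2.
  rewrite [in LHS]a_r (_ : _ / (2 * T) = (r / 2) ^+ 2); last by field; rewrite gt_eqF.
  by rewrite sqrtr_sqr ger0_norm // divr_ge0 // ltW.
by rewrite [in LHS]a_r; field; rewrite !gt_eqF.
Qed.

Lemma ewa_tuned_regret_le (R : realType) (K : nat) (L : nat -> 'I_K -> R)
    (C : R) (T : nat) (k : 'I_K) :
  (0 < T)%N -> 0 < C -> (forall t j, (t < T)%N -> 0 <= L t j <= C) ->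
  \sum_(t < T) \sum_j ewa_pi (2 / C * Num.sqrt (2 * ln K%:R / T%:R)) L t j * L t j <=
  \sum_(t < T) L t k + T%:R * (C * Num.sqrt (ln K%:R / (2 * T%:R))).
Proof.
move=> T_gt0 C_gt0 L_bnd; set eta := 2 / C * _.
have K_gt0 : (0 < K)%N := leq_ltn_trans (leq0n k) (ltn_ord k).
have [K1 | K_gt1] : K = 1%N \/ (1 < K)%N by case: K {L L_bnd k eta} K_gt0 => [|[|]]; auto.
- (* Then eta = 0 and all the weight sits on the single expert k. *)
  have j_eq_k (j : 'I_K) : j = k
    by apply: val_inj => /=; have := ltn_ord j; have := ltn_ord k; lia.
  have -> : ln (K%:R : R) = 0 by rewrite K1 ln1.
  rewrite mul0r sqrtr0 !mulr0 addr0; apply: ler_sum => t _.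
  rewrite (eq_bigr (fun j => ewa_pi eta L t j * L t k)) => [|j _]; last first.
    by rewrite (j_eq_k j).
  by rewrite -mulr_suml ewa_pi_sum1 // mul1r.
- have lnK_gt0 : 0 < ln (K%:R : R) by rewrite ln_gt0 // ltr1n.
  have T_gt0' : (0 : R) < T%:R by rewrite ltr0n.
  have eta_gt0 : 0 < eta by rewrite mulr_gt0 ?divr_gt0 // sqrtr_gt0 divr_gt0 // mulr_gt0.
  by rewrite -tuned_rate_balance // ewa_regret_le.
Qed.

Theorem theorem2 (R : realType) (X Y Z : Type) (K : nat) (g : 'I_K -> X -> Z)
  (H : set (Z -> R)) (loss : R -> Y -> R)
  (alg : (X -> Z) -> seq (X * Y) -> X -> R)
  (T m : nat) (x : nat -> nat -> X) (y : nat -> nat -> Y)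
  (C : R) (beta : (X -> Z) -> nat -> R) :
  (0 < K)%N -> (0 < T)%N -> 0 < C ->
  (forall t k, (t < T)%N ->
     0 <= Lhat alg loss x y m (g k) t <= C) ->
  (forall t k, (t < T)%N ->
     (within_regret alg H loss x y m (g k) t <= (beta (g k) m)%:E)%E) ->
  let eta := 2 / C * Num.sqrt (2 * ln K%:R / T%:R) in
  ((T%:R^-1 * \sum_(t < T) ewa_expected_loss g alg loss x y m eta t)%:E
   <= \big[Order.min/+oo%E]_(k < K)
        ((T%:R^-1)%:E * (\sum_(t < T) best_loss H loss x y m (g k) t)
         + (beta (g k) m)%:E)
      + (C * Num.sqrt (ln K%:R / (2 * T%:R)))%:E)%E.
Proof.
move=> K_gt0 T_gt0 C_gt0 L_bnd regret_le; cbv zeta; set eta := 2 / C * _.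
have [k _ ->] := eq_bigmin (Ordinal K_gt0) xpredT
  (fun k => (T%:R^-1)%:E * (\sum_(t < T) best_loss H loss x y m (g k) t)
            + (beta (g k) m)%:E)%E isT (fun k _ => leey _).
pose L t j := Lhat alg loss x y m (g j) t.
set B := (\sum_(t < T) _)%E; set b := beta (g k) m; set D := C * _.
have T_gt0' : (0 : R) < T%:R by rewrite ltr0n.
have ewa_le : \sum_(t < T) ewa_expected_loss g alg loss x y m eta t <=
              \sum_(t < T) L t k + T%:R * D.
  exact: (@ewa_tuned_regret_le R K L C T k T_gt0 C_gt0 L_bnd).
have Lk_le t : (t < T)%N -> ((L t k)%:E <= best_loss H loss x y m (g k) t + b%:E)%E.
  by move=> t_lt_T; rewrite addeC -lee_subel_addr //; exact: regret_le.
have L_le : ((\sum_(t < T) L t k)%:E <= B + (T%:R * b)%:E)%E.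
  apply: (le_trans (y := \sum_(t < T) (best_loss H loss x y m (g k) t + b%:E))%E).
    by rewrite -sumEFin; apply: lee_sum => t _; exact: Lk_le.
  by rewrite big_split /= sumEFin sumr_const card_ord mulr_natl.
apply: (le_trans (y := (T%:R^-1 * (\sum_(t < T) L t k + T%:R * D))%:E)).
  by rewrite lee_fin ler_wpM2l // invr_ge0 ltW.
rewrite mulrDr mulrA mulVf ?gt_eqF // mul1r EFinD EFinM leeD2r //.
apply: (le_trans (lee_wpmul2l _ L_le)); first by rewrite lee_fin invr_ge0 ltW.
by rewrite muleDr ?fin_num_adde_defl // -EFinM mulrA mulVf ?gt_eqF // mul1r.
Qed.
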